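(* Let $p$ and $s$ be distinct odd primes, $g$ a primitive root modulo $p$, $\zeta$ a primitive $p$-th root of unity in $\overline{\mathbb{F}}_s$, and $G(p)=\langle a,b\mid a^p=1=b^{(p-1)/2},\ b^{-1}ab=a^{g^2}\rangle$. Let $\rho:\langle a\rangle\to\overline{\mathbb{F}}_s^*$ be given by $\rho(a)=\zeta$ and let $\rho^{G(p)}$ be the induced representation. Then $\rho^{G(p)}$ is realizable over $\mathbb{F}_s$ if and only if $\left(\frac{p^*}{s}\right)=1$, where $p^*=(-1)^{(p-1)/2}p$.
   Context: $\left(\frac{\cdot}{s}\right)$ is the Legendre symbol. A representation over $\overline{\mathbb{F}}_s$ is realizable over $\mathbb{F}_s$ if it is equivalent (over $\overline{\mathbb{F}}_s$) to a matrix representation with all matrix entries in $\mathbb{F}_s$. Concretely, with $n=(p-1)/2$, $\rho^{G(p)}$ acts on a space with basis $e_0,\dots,e_{n-1}$ by $ae_i=\zeta^{g^{2i}}e_i$, $be_i=e_{i+1}$ (indices modulo $n$). *)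

From HB Require Import structures.
From mathcomp Require Import all_boot all_order all_algebra all_fingroup all_field.
Set Implicit Arguments. Unset Strict Implicit. Unset Printing Implicit Defensive.
Import GRing.Theory.
Local Open Scope ring_scope.

Definition legendre (a : int) (s : nat) : int :=
  let a' : 'F_s := a%:~R in
  if a' == 0 then 0
  else if [exists x : 'F_s, x ^+ 2 == a'] then 1 else -1.

(* The matrices of the induced representation rho^{G(p)} on the basis
   e_0..e_{n-1}, n = (p-1)/2, acting on column vectors:
   a e_i = zeta^(g^(2i)) e_i,  b e_i = e_{i+1} (indices mod n). *)
Definition ind_a (L : fieldType) (n g : nat) (zeta : L) : 'M[L]_n :=
  \matrix_(i < n, j < n) (if i == j then zeta ^+ (g ^ (2 * j)) else 0).

Definition ind_b (L : fieldType) (n : nat) : 'M[L]_n :=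
  \matrix_(i < n, j < n) (if (i : nat) == (j.+1 %% n)%N then 1 else 0).

Definition Fs_to (s : nat) (L : fieldType) (c : 'F_s) : L := (c : nat)%:R.

(* A pair of matrices (images of the generators a, b) is realizable over F_s
   if it is conjugate over L to a pair of matrices with entries in F_s;
   a representation of G(p) is determined by the images of a and b. *)
Definition realizable_over_Fs (s : nat) (L : fieldType) (n : nat)
    (A B : 'M[L]_n) : Prop :=
  exists (P : 'M[L]_n) (A' B' : 'M['F_s]_n),
    P \in unitmx /\
    P *m A *m invmx P = map_mx (@Fs_to s L) A' /\
    P *m B *m invmx P = map_mx (@Fs_to s L) B'.

From HB Require Import structures.
From mathcomp Require Import all_boot all_order all_algebra all_fingroup all_field.
Import GRing.Theory.
Local Open Scope ring_scope.
Set Implicit Arguments. Unset Strict Implicit.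

(* The trace of rho^G(p)(a) is the Gaussian period eta = sum_j zeta^(g^(2j)), and
   tau = 2 eta + 1 is the quadratic Gauss sum, with tau^2 = p^*.  If the representation
   is realizable over F_s its trace is fixed by the Frobenius x |-> x^s, hence so is tau,
   and p^* = tau^2 is a square in F_s.  Conversely, if p^* is a square then tau is
   Frobenius-fixed; as tau^s = (-1)^k tau where s = g^k mod p, k is even and the
   Frobenius permutes the eigenvalues zeta^(g^(2j)) of a by the cyclic shift
   j |-> j + k/2.  The Vandermonde matrix M of these eigenvalues then satisfies
   M^(s) = M Q for the matrix Q of that shift, which commutes with b, so conjugating
   both generators by M yields Frobenius-fixed matrices, i.e. matrices over F_s. *)

Section PrimeSubfield.

Variables (s : nat) (L : fieldType).
Hypotheses (s_prime : prime s) (sL : s \in [pchar L]).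
Local Notation iota := (@Fs_to s L).

Lemma Fp_natE (x : 'F_s) : x = (x : nat)%:R.
Proof. by apply: val_inj; rewrite /= val_Fp_nat // modn_small // -{2}(Fp_cast s_prime). Qed.

Lemma Fs_to_natr (a : nat) : iota a%:R = a%:R.
Proof.
by rewrite /Fs_to val_Fp_nat // {2}(divn_eq a s) natrD natrM (pcharf0 sL) mulr0 add0r.
Qed.

Lemma Fs_toD (x y : 'F_s) : iota (x + y) = iota x + iota y.
Proof. by rewrite {1}(Fp_natE x) {1}(Fp_natE y) -natrD Fs_to_natr natrD. Qed.

Lemma Fs_toM (x y : 'F_s) : iota (x * y) = iota x * iota y.
Proof. by rewrite {1}(Fp_natE x) {1}(Fp_natE y) -natrM Fs_to_natr natrM. Qed.

Lemma Fs_toN (x : 'F_s) : iota (- x) = - iota x.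
Proof. by apply/eqP; rewrite -addr_eq0 -Fs_toD addNr. Qed.

Lemma Fs_to_intr (z : int) : iota z%:~R = z%:~R.
Proof. by case: z => a; rewrite ?NegzE ?mulrNz ?Fs_toN Fs_to_natr. Qed.

Lemma Fs_to_sqr (x : 'F_s) : iota (x ^+ 2) = iota x ^+ 2.
Proof. by rewrite !expr2 Fs_toM. Qed.

Lemma Fs_to_eq0 (x : 'F_s) : (iota x == 0) = (x == 0).
Proof.
apply/idP/eqP => [|->]; last by [].
rewrite /Fs_to -(dvdn_pcharf sL) => sx; apply: val_inj => /=.
have := ltn_ord x; rewrite [X in (_ < X)%N]Fp_cast // => xs.
by apply/eqP; apply: contraTT xs; rewrite -leqNgt -lt0n => /dvdn_leq; apply.
Qed.

Lemma Fs_to_inj : injective iota.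
Proof.
move=> x y exy; apply/eqP; rewrite -subr_eq0 -Fs_to_eq0.
by rewrite Fs_toD Fs_toN exy subrr.
Qed.

Lemma Fs_to_frob (x : 'F_s) : iota x ^+ s = iota x.
Proof. by rewrite /Fs_to -(pFrobenius_autE sL) pFrobenius_aut_nat. Qed.

Lemma frob_fixed_Fs_to (c : L) : c ^+ s = c -> exists x : 'F_s, iota x = c.
Proof.
move=> cs; apply/exists_eqP; apply: contraT => c_out.
pose P : {poly L} := 'X^s - 'X.
have sizeP : size P = s.+1.
  by rewrite size_polyDl size_polyXn // size_polyN size_polyX ltnS prime_gt1.
pose roots := c :: [seq iota x | x : 'F_s].
have roots_root : all (root P) roots.
  apply/allP => y; rewrite inE => /predU1P [->|/mapP [x _ ->]];
    by rewrite /root !hornerE ?cs ?Fs_to_frob subrr.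
have roots_uniq : uniq roots.
  rewrite /= map_inj_uniq ?enum_uniq ?andbT //; last exact: Fs_to_inj.
  by apply: contra c_out => /mapP [x _ ->]; apply/exists_eqP; exists x.
have := max_poly_roots _ roots_root roots_uniq.
by rewrite -size_poly_eq0 sizeP /= size_map -cardT card_Fp // ltnn; apply.
Qed.

Lemma frob_fixed_sqrt (a : 'F_s) (t : L) :
  t ^+ 2 = iota a -> t ^+ s = t <-> exists x : 'F_s, x ^+ 2 = a.
Proof.
move=> ta; split=> [/frob_fixed_Fs_to [x tx] | [x xa]].
  by exists x; apply: Fs_to_inj; rewrite Fs_to_sqr tx.
have /eqP : (iota x - t) * (iota x + t) = 0 by rewrite -subr_sqr -Fs_to_sqr xa ta subrr.
rewrite -(pFrobenius_autE sL) mulf_eq0 subr_eq0 addr_eq0 eq_sym -eqr_oppLR.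
by case/orP => /eqP; [move-> | move<-]; rewrite ?rmorphN /= pFrobenius_autE Fs_to_frob.
Qed.

Lemma frob_fixed_mx (m n : nat) (Y : 'M[L]_(m, n)) :
  map_mx (pFrobenius_aut sL) Y = Y -> exists Y' : 'M['F_s]_(m, n), map_mx iota Y' = Y.
Proof.
move=> /matrixP Yfix.
have /fin_all_exists [y yE] : forall ij : 'I_m * 'I_n, exists x : 'F_s, iota x = Y ij.1 ij.2.
  by move=> [i j]; apply: frob_fixed_Fs_to; rewrite -(pFrobenius_autE sL) -{2}Yfix mxE.
by exists (\matrix_(i, j) y (i, j)); apply/matrixP => i j; rewrite !mxE yE.
Qed.

Lemma realizable_trace_frob (n : nat) (A B : 'M[L]_n) :
  realizable_over_Fs s A B -> \tr A ^+ s = \tr A.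
Proof.
move=> [P [A' [_ [Pu [PA _]]]]].
have <- : \tr (P *m A *m invmx P) = \tr A by rewrite mxtrace_mulC mulmxA mulVmx ?mul1mx.
rewrite PA -(pFrobenius_autE sL) rmorph_sum; apply: eq_bigr => i _.
by rewrite mxE /= pFrobenius_autE Fs_to_frob.
Qed.

End PrimeSubfield.

Lemma sum_periodic_shift (R : nmodType) (N k : nat) (h : nat -> R) :
  (forall i, h (i + N)%N = h i) -> \sum_(i < N) h (i + k)%N = \sum_(i < N) h i.
Proof.
move=> h_per; elim: k => [|k IHk]; first by apply: eq_bigr => i _; rewrite addn0.
case: N h_per IHk => [|N] h_per IHk; first by rewrite !big_ord0.
rewrite -IHk big_ord_recr [in RHS]big_ord_recl /= [(N + _)%N]addnC addSnnS h_per addrC.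
by congr (_ + _); apply: eq_bigr => i _; rewrite /bump add1n addSnnS.
Qed.

Lemma sum_ord_double (R : nmodType) (n : nat) (h : nat -> R) :
  \sum_(i < n.*2) h i = \sum_(j < n) (h j.*2 + h j.*2.+1).
Proof. by elim: n => [|n IHn]; rewrite ?big_ord0 // doubleS !big_ord_recr /= IHn addrA. Qed.

Lemma sum_prim_root_expr (L : idomainType) (n : nat) (z : L) :
  (1 < n)%N -> n.-primitive_root z -> \sum_(i < n) z ^+ i = 0.
Proof.
move=> n_gt1 zP; have z_neq1 : z != 1.
  by rewrite -[z]expr1 -(expr0 z) (eq_prim_root_expr zP) mod0n modn_small.
apply/eqP; move: (prim_expr_order zP) => /eqP; rewrite -subr_eq0 subrX1.
by rewrite mulf_eq0 subr_eq0 (negbTE z_neq1).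
Qed.

Lemma sign_addn_double (R : pzRingType) (k m : nat) : (-1) ^+ (k + m.*2) = (-1) ^+ k :> R.
Proof. by rewrite exprD -muln2 exprM sqrr_sign mulr1. Qed.

Lemma sum_sign_double (R : pzRingType) (m : nat) : \sum_(i < m.*2) (-1) ^+ i = 0 :> R.
Proof.
rewrite sum_ord_double big1 // => j _.
by rewrite exprS -[j.*2]add0n sign_addn_double expr0 mulr1 addrN.
Qed.

Lemma mulmx_col_supp (R : pzSemiRingType) (m n p : nat) (X : 'M[R]_(m, n))
    (Y : 'M[R]_(n, p)) (i : 'I_m) (j : 'I_p) (c : 'I_n) :
  (forall l, l != c -> Y l j = 0) -> (X *m Y) i j = X i c * Y c j.
Proof. by move=> Y0; rewrite mxE (bigD1 c) //= big1 ?addr0 // => l /Y0 ->; rewrite mulr0. Qed.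

Definition shift_mx (R : pzSemiRingType) (N m : nat) : 'M[R]_N.+1 :=
  \matrix_(i, j) (i == inZp (j + m))%:R.

Section ShiftMatrix.

Variables (R : pzSemiRingType) (N : nat).
Local Notation shift_mx := (@shift_mx R N).

Lemma mulmx_shift_mx (k m : nat) (X : 'M[R]_(k, N.+1)) i j :
  (X *m shift_mx m) i j = X i (inZp (j + m)).
Proof.
rewrite (mulmx_col_supp X i (c := inZp (j + m))) ?mxE ?eqxx ?mulr1 // => l.
by rewrite mxE => /negbTE ->.
Qed.

Lemma shift_mxD (a b : nat) : shift_mx a *m shift_mx b = shift_mx (a + b).
Proof.
apply/matrixP => i j; rewrite mulmx_shift_mx !mxE; congr (_ == _)%:R.
by apply: val_inj; rewrite /= modnDml addnAC addnA.
Qed.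

Lemma shift_mx_diag (m : nat) (lam : 'I_N.+1 -> R) :
  shift_mx m *m diag_mx (\row_j lam (inZp (j + m))) = diag_mx (\row_j lam j) *m shift_mx m.
Proof.
rewrite mul_mx_diag mul_diag_mx; apply/matrixP => i j; rewrite !mxE.
by case: eqP => [->|]; rewrite ?mulr1 ?mul1r ?mulr0 ?mul0r.
Qed.

End ShiftMatrix.

Lemma map_shift_mx (R S : pzSemiRingType) (f : {rmorphism R -> S}) (N m : nat) :
  map_mx f (shift_mx R N m) = shift_mx S N m.
Proof. by apply/matrixP => i j; rewrite !mxE rmorph_nat. Qed.

Lemma ind_b_shift (L : fieldType) (N : nat) : ind_b L N.+1 = shift_mx L N 1.
Proof. by apply/matrixP => i j; rewrite !mxE -(inj_eq val_inj) /= addn1; case: eqP. Qed.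

Lemma unitmx_Vandermonde (L : fieldType) (n : nat) (lam : 'I_n -> L) :
  injective lam -> Vandermonde n (\row_j lam j) \in unitmx.
Proof.
move=> lam_inj; rewrite unitmxE unitfE det_Vandermonde.
apply/prodf_neq0 => i _; apply/prodf_neq0 => j ij; rewrite !mxE subr_eq0.
by apply: contraTneq ij => /lam_inj ->; rewrite ltnn.
Qed.

Lemma map_Vandermonde_shift (L : fieldType) (f : {rmorphism L -> L}) (N m : nat)
    (lam : 'I_N.+1 -> L) :
  (forall j, f (lam j) = lam (inZp (j + m))) ->
  map_mx f (Vandermonde N.+1 (\row_j lam j)) = Vandermonde N.+1 (\row_j lam j) *m shift_mx L N m.
Proof. by move=> flam; apply/matrixP => k j; rewrite mulmx_shift_mx !mxE rmorphXn /= flam. Qed.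

Lemma map_mx_conj_fixed (L : fieldType) (f : {rmorphism L -> L}) (n : nat) (M Q X : 'M[L]_n) :
  M \in unitmx -> map_mx f M = M *m Q -> Q *m map_mx f X = X *m Q ->
  map_mx f (M *m X *m invmx M) = M *m X *m invmx M.
Proof.
move=> Mu fM QX; have MQu : M *m Q \in unitmx by rewrite -fM map_unitmx.
rewrite !map_mxM map_invmx fM -(mulmxA M Q) QX mulmxA -[RHS](mulmxK MQu).
by congr (_ *m _); rewrite !mulmxA mulmxKV.
Qed.

Lemma realizable_diag_shift (s : nat) (L : fieldType) (N m : nat) (lam : 'I_N.+1 -> L) :
  prime s -> s \in [pchar L] -> injective lam ->
  (forall j, lam j ^+ s = lam (inZp (j + m))) ->
  realizable_over_Fs s (diag_mx (\row_j lam j)) (ind_b L N.+1).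
Proof.
move=> s_prime sL lam_inj lam_frob.
pose frob := pFrobenius_aut sL.
pose M := Vandermonde N.+1 (\row_j lam j); pose Q := shift_mx L N m.
have Mu : M \in unitmx by apply: unitmx_Vandermonde.
have frobM : map_mx frob M = M *m Q.
  by apply: map_Vandermonde_shift => j; rewrite /frob /= pFrobenius_autE.
have descend X : Q *m map_mx frob X = X *m Q ->
    exists X', map_mx (@Fs_to s L) X' = M *m X *m invmx M.
  by move=> QX; apply: frob_fixed_mx => //; exact: map_mx_conj_fixed Mu frobM QX.
have [A' A'E] : exists A', map_mx (@Fs_to s L) A' = M *m diag_mx (\row_j lam j) *m invmx M.
  apply: descend; rewrite -shift_mx_diag; congr (_ *m _).
  by apply/matrixP => i j; rewrite !mxE /frob rmorphMn /= pFrobenius_autE lam_frob.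
have [B' B'E] : exists B', map_mx (@Fs_to s L) B' = M *m ind_b L N.+1 *m invmx M.
  by apply: descend; rewrite ind_b_shift map_shift_mx !shift_mxD addnC.
by exists M, A', B'.
Qed.

Lemma legendre_eq1 (a : int) (s : nat) : (a%:~R : 'F_s) != 0 ->
  legendre a s = 1 <-> exists x : 'F_s, x ^+ 2 = a%:~R.
Proof.
rewrite /legendre => /negbTE ->; split.
  by case: existsP => [[x /eqP xa] _ | _ /eqP //]; exists x.
by move=> [x xa]; case: existsP => // -[]; exists x; rewrite xa.
Qed.

Lemma sign_eq1_even (R : idomainType) (k : nat) :
  (2%:R : R) != 0 -> (-1) ^+ k = 1 :> R -> ~~ odd k.
Proof.
move=> two_neq0; rewrite -signr_odd; case: (odd k) => //= /eqP.
by rewrite expr1 eq_sym -addr_eq0 -mulr2n (negbTE two_neq0).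
Qed.

Lemma ind_a_diag (L : fieldType) (n g : nat) (zeta : L) :
  ind_a n g zeta = diag_mx (\row_j zeta ^+ (g ^ (2 * j))).
Proof. by apply/matrixP => i j; rewrite !mxE; case: eqP => [->|_]; rewrite ?mulr1n. Qed.

(* [(-1) ^+ e] is the quadratic character of [g ^ e] modulo [p], so this is the
   quadratic Gauss sum [\sum_x (x / p) zeta ^+ x] indexed by discrete logarithms. *)
Definition gauss_sum (L : pzRingType) (p g : nat) (zeta : L) : L :=
  \sum_(e < p.-1) (-1) ^+ e * zeta ^+ (g ^ e).

Section GaussSum.

Variables (p g : nat) (L : fieldType) (zeta : L).
Hypotheses (p_prime : prime p) (p_odd : odd p).
Hypotheses (gP : (p.-1).-primitive_root (g%:R : 'F_p)) (zetaP : p.-primitive_root zeta).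
Local Notation n := p./2.
Local Notation tau := (gauss_sum p g zeta).

Let pred_double_half : p.-1 = n.*2.
Proof. by rewrite odd_halfK. Qed.

Let half_lt_pred : (n < p.-1)%N.
Proof. by rewrite pred_double_half -addnn -{1}[n]addn0 ltn_add2l half_gt0 prime_gt1. Qed.

Lemma zeta_expr_Fp (a b : nat) : (a%:R : 'F_p) = b%:R -> zeta ^+ a = zeta ^+ b.
Proof.
move/(congr1 val); rewrite /= !val_Fp_nat // => eab.
by rewrite -(prim_expr_mod zetaP) eab prim_expr_mod.
Qed.

Lemma zeta_g_mod (e : nat) : zeta ^+ (g ^ (e %% p.-1)) = zeta ^+ (g ^ e).
Proof. by apply: zeta_expr_Fp; rewrite !natrX prim_expr_mod. Qed.

Lemma zeta_g_periodic (e : nat) : zeta ^+ (g ^ (e + p.-1)) = zeta ^+ (g ^ e).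
Proof. by rewrite -zeta_g_mod modnDr zeta_g_mod. Qed.

Lemma zeta_g_inj (e1 e2 : nat) : (e1 < p.-1)%N -> (e2 < p.-1)%N ->
  zeta ^+ (g ^ e1) = zeta ^+ (g ^ e2) -> e1 = e2.
Proof.
move=> e1_lt e2_lt /eqP; rewrite (eq_prim_root_expr zetaP) -!val_Fp_nat // => /eqP/val_inj.
by rewrite !natrX => /eqP; rewrite (eq_prim_root_expr gP) !modn_small // => /eqP.
Qed.

Lemma zeta_g_expr (c k e : nat) : (c%:R : 'F_p) = g%:R ^+ k ->
  zeta ^+ (g ^ e) ^+ c = zeta ^+ (g ^ (e + k)).
Proof. by move=> ck; rewrite -exprM; apply: zeta_expr_Fp; rewrite natrM !natrX ck exprD. Qed.

Lemma g_neq0 : (g%:R : 'F_p) != 0.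
Proof.
apply/eqP => g0; have := prim_expr_order gP.
by rewrite g0 expr0n eqn0Ngt ltn_predRL prime_gt1 //= => /eqP; rewrite eq_sym oner_eq0.
Qed.

Lemma g_orbit_inj (C : 'F_p) : C != 0 -> injective (fun e : 'I_p.-1 => (g%:R : 'F_p) ^+ e * C).
Proof.
move=> C_neq0 e1 e2 /(mulIf C_neq0)/eqP; rewrite (eq_prim_root_expr gP) !modn_small //.
by move/eqP/val_inj.
Qed.

Lemma Fp_units_g_orbit (C : 'F_p) : C != 0 ->
  [set~ 0] = [set (g%:R : 'F_p) ^+ e * C | e : 'I_p.-1].
Proof.
move=> C_neq0; apply/eqP; rewrite eq_sym eqEcard card_imset; last exact: g_orbit_inj.
rewrite cardsC1 card_Fp // card_ord leqnn andbT.
by apply/subsetP => _ /imsetP [e _ ->]; rewrite in_setC1 mulf_neq0 // expf_neq0 ?g_neq0.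
Qed.

Lemma Fp_log (x : 'F_p) : x != 0 -> exists k, x = (g%:R : 'F_p) ^+ k.
Proof.
move=> x_neq0; have : x \in [set~ 0] by rewrite in_setC1.
by rewrite (Fp_units_g_orbit (oner_neq0 _)) => /imsetP [e _ ->]; exists e; rewrite mulr1.
Qed.

Lemma sum_zeta_g_orbit (c : nat) :
  \sum_(e < p.-1) zeta ^+ (g ^ e * c) = if (p %| c)%N then (p.-1)%:R else -1.
Proof.
case: ifP => [p_dvd_c | p_ndvd_c].
  rewrite (eq_bigr (fun _ => 1)) ?sumr_const ?card_ord // => e _.
  by rewrite -(prim_expr_mod zetaP) (eqP (dvdn_mull _ p_dvd_c)).
have c_neq0 : (c%:R : 'F_p) != 0 by rewrite -(dvdn_pcharf (pchar_Fp p_prime)) p_ndvd_c.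
pose F (x : 'F_p) := zeta ^+ x.
have F_orbit e : zeta ^+ (g ^ e * c) = F ((g%:R : 'F_p) ^+ e * c%:R).
  by apply: zeta_expr_Fp; rewrite -natrX -natrM -Fp_natE.
have sumF : \sum_x F x = 0.
  rewrite /F -(big_mkord xpredT (fun i => zeta ^+ i)) Fp_cast // big_mkord.
  exact: sum_prim_root_expr (prime_gt1 p_prime) zetaP.
rewrite (eq_bigr _ (fun (e : 'I_p.-1) _ => F_orbit e)).
rewrite -(big_imset F (in2W (g_orbit_inj c_neq0))) /= -Fp_units_g_orbit //.
have /eqP := sumF; rewrite (bigD1 0) //= [F 0]expr0 addrC addr_eq0 => /eqP <-.
by apply: eq_bigl => x; rewrite in_setC1.
Qed.

Lemma g_expr_half : (g%:R : 'F_p) ^+ n = -1.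
Proof.
have : ((g%:R : 'F_p) ^+ n) ^+ 2 == 1 by rewrite -exprM muln2 -pred_double_half prim_expr_order.
rewrite sqrf_eq1 => /orP [/eqP gn1|/eqP //]; have := eq_prim_root_expr gP n 0.
by rewrite gn1 expr0 eqxx mod0n modn_small ?half_lt_pred // eqn0Ngt half_gt0 prime_gt1.
Qed.

Lemma dvdn_1_add_g_expr (d : nat) : (d < p.-1)%N -> (p %| 1 + g ^ d)%N = (d == n).
Proof.
move=> d_lt; rewrite (dvdn_pcharf (pchar_Fp p_prime)) natrD natrX addrC addr_eq0.
by rewrite -g_expr_half (eq_prim_root_expr gP) !modn_small ?half_lt_pred.
Qed.

Lemma gauss_sum_sqr_orbits :
  tau ^+ 2 = \sum_(d < p.-1) (-1) ^+ d * \sum_(e < p.-1) zeta ^+ (g ^ e * (1 + g ^ d)).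
Proof.
rewrite expr2 {1}/gauss_sum mulr_suml.
under eq_bigr => e _.
  rewrite /gauss_sum -(@sum_periodic_shift _ _ e (fun f => (-1) ^+ f * zeta ^+ (g ^ f))).
    rewrite mulr_sumr; under eq_bigr => d _.
      rewrite mulrACA -exprD addnCA addnn sign_addn_double -exprD.
      rewrite [(g ^ e + _)%N](_ : _ = g ^ e * (1 + g ^ d))%N; last first.
        by rewrite mulnDr muln1 expnD mulnC.
    over.
  over.
  by move=> i; rewrite pred_double_half sign_addn_double -pred_double_half zeta_g_periodic.
by rewrite exchange_big; apply: eq_bigr => d _; rewrite mulr_sumr.
Qed.

Lemma gauss_sum_sqr : tau ^+ 2 = (-1) ^+ n * p%:R.
Proof.
rewrite gauss_sum_sqr_orbits.
under eq_bigr => d _.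
  rewrite sum_zeta_g_orbit dvdn_1_add_g_expr //.
  have -> : (if d == n :> nat then (p.-1)%:R else -1) = -1 + (d == n :> nat)%:R * p%:R :> L.
    by case: eqP => _; rewrite ?mul0r ?addr0 // mul1r -subn1 natrB ?prime_gt0 // addrC.
  rewrite mulrDr mulrN1.
over.
rewrite big_split /= sumrN pred_double_half sum_sign_double oppr0 add0r -pred_double_half.
rewrite (bigD1 (Ordinal half_lt_pred)) //= eqxx mul1r big1 ?addr0 // => d.
by rewrite -(inj_eq val_inj) => /negbTE ->; rewrite mul0r mulr0.
Qed.

Lemma gauss_sum_neq0 : (p%:R : L) != 0 -> tau != 0.
Proof. by move=> p_neq0; rewrite -sqrf_eq0 gauss_sum_sqr mulf_eq0 signr_eq0 (negbTE p_neq0). Qed.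

Lemma gauss_sum_frob (s k : nat) : s \in [pchar L] -> (s%:R : 'F_p) = g%:R ^+ k ->
  tau ^+ s = (-1) ^+ k * tau.
Proof.
move=> sL sk; rewrite -(pFrobenius_autE sL) rmorph_sum [in RHS]/gauss_sum.
rewrite -(@sum_periodic_shift _ _ k (fun f => (-1) ^+ f * zeta ^+ (g ^ f))) => [|i]; last first.
  by rewrite pred_double_half sign_addn_double -pred_double_half zeta_g_periodic.
rewrite mulr_sumr; apply: eq_bigr => e _.
rewrite rmorphM rmorphXn rmorphN1 /= pFrobenius_autE (zeta_g_expr _ sk).
by rewrite mulrA -exprD addnCA addnn sign_addn_double.
Qed.

Lemma trace_ind_a_gauss_sum : 2%:R * \tr (ind_a n g zeta) = tau - 1.
Proof.
have sum_orbit1 : \sum_(e < p.-1) zeta ^+ (g ^ e) = -1.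
  have := sum_zeta_g_orbit 1; rewrite dvdn1 gtn_eqF ?prime_gt1 // => <-.
  by apply: eq_bigr => e _; rewrite muln1.
rewrite -sum_orbit1 /gauss_sum -big_split /= pred_double_half.
rewrite (@sum_ord_double _ _ (fun i => (-1) ^+ i * zeta ^+ (g ^ i) + zeta ^+ (g ^ i))) mulr_sumr.
apply: eq_bigr => j _; rewrite mxE eqxx exprS -[j.*2]add0n sign_addn_double expr0 mulr1 mul1r.
by rewrite mulN1r addNr addr0 mul2n mulr_natl mulr2n.
Qed.

Section InducedRepresentation.

Variable s : nat.
Hypotheses (s_prime : prime s) (s_odd : odd s) (p_neq_s : p != s) (sL : s \in [pchar L]).

Local Notation pstar := ((-1) ^+ n * (p : int)).

Let p_neq0 : (p%:R : L) != 0.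
Proof. by rewrite -(dvdn_pcharf sL) dvdn_prime2 // eq_sym. Qed.

Lemma gauss_sum_sqr_Fs : tau ^+ 2 = Fs_to L (pstar%:~R : 'F_s).
Proof. by rewrite Fs_to_intr // gauss_sum_sqr rmorphM rmorphXn rmorphN1. Qed.

Lemma pstar_Fs_neq0 : (pstar%:~R : 'F_s) != 0.
Proof. by rewrite -(Fs_to_eq0 s_prime sL) -gauss_sum_sqr_Fs sqrf_eq0 gauss_sum_neq0. Qed.

Lemma realizable_ind_gauss_sum_frob :
  realizable_over_Fs s (ind_a n g zeta) (ind_b L n) -> tau ^+ s = tau.
Proof.
move=> /(realizable_trace_frob sL) tr_frob.
have : (tau - 1) ^+ s = tau - 1.
  by rewrite -trace_ind_a_gauss_sum exprMn tr_frob -(pFrobenius_autE sL) rmorph_nat.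
by rewrite -(pFrobenius_autE sL) rmorphB rmorph1 => /addIr.
Qed.

Lemma gauss_sum_frob_realizable :
  tau ^+ s = tau -> realizable_over_Fs s (ind_a n g zeta) (ind_b L n).
Proof.
move=> tau_frob.
have s_neq0 : (s%:R : 'F_p) != 0 by rewrite -(dvdn_pcharf (pchar_Fp p_prime)) dvdn_prime2.
have [k sk] := Fp_log s_neq0.
have two_neq0 : (2%:R : L) != 0.
  by rewrite -(dvdn_pcharf sL) dvdn_prime2 //; apply: contraTneq s_odd => ->.
have /(sign_eq1_even two_neq0) k_even : (-1) ^+ k = 1 :> L.
  by apply: (mulIf (gauss_sum_neq0 p_neq0)); rewrite mul1r -(gauss_sum_frob sL sk).
have n_gt0 : (0 < n)%N by rewrite half_gt0 prime_gt1.
have p_pred : (p.-1 = 2 * n.-1.+1)%N by rewrite prednK // mul2n odd_halfK.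
rewrite ind_a_diag -(prednK n_gt0).
apply: (realizable_diag_shift (m := k./2) s_prime sL) => [i j | j].
  have lt_pred (x : 'I_n.-1.+1) : (2 * x < p.-1)%N by rewrite p_pred ltn_pmul2l.
  move=> /(zeta_g_inj (lt_pred i) (lt_pred j)) /eqP.
  by rewrite eqn_pmul2l // => /eqP/val_inj.
rewrite (zeta_g_expr _ sk) -zeta_g_mod /= p_pred.
by rewrite muln_modr mulnDr [(2 * k./2)%N]mul2n even_halfK.
Qed.

Lemma realizable_ind_iff_gauss_sum_frob :
  realizable_over_Fs s (ind_a n g zeta) (ind_b L n) <-> tau ^+ s = tau.
Proof. by split; [apply: realizable_ind_gauss_sum_frob | apply: gauss_sum_frob_realizable]. Qed.

End InducedRepresentation.

End GaussSum.

Theorem theorem3p3 (p s : nat) (L : closedFieldType) (g : nat) (zeta : L) :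
  prime p -> prime s -> odd p -> odd s -> p != s ->
  (p.-1).-primitive_root (g%:R : 'F_p) ->
  (s \in [pchar L]) ->
  p.-primitive_root zeta ->
  (realizable_over_Fs s (ind_a p./2 g zeta) (ind_b L p./2)
   <-> legendre ((-1) ^+ p./2 * (p : int)) s = 1).
Proof.
move=> p_prime s_prime p_odd s_odd p_neq_s gP sL zetaP.
have realizable_tau :=
  realizable_ind_iff_gauss_sum_frob p_prime p_odd gP zetaP s_prime s_odd p_neq_s sL.
have tau_sqrt :=
  frob_fixed_sqrt s_prime sL (gauss_sum_sqr_Fs p_prime p_odd gP zetaP s_prime sL).
have legendre_sqrt :=
  legendre_eq1 (pstar_Fs_neq0 p_prime p_odd gP zetaP s_prime p_neq_s sL).
by split=> [/realizable_tau/tau_sqrt/legendre_sqrt | /legendre_sqrt/tau_sqrt/realizable_tau].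
Qed.
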